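(* Let $k>1$, $\gamma>0$, $\delta>1$, and let $Z=\{(\tau,s)\in\mathcal C: g(\tau,s)=0\}$. (A) If $1<\delta<\Phi$ and $\gamma>\gamma_+(\delta)$, then for every $\tau\in(0,1]$ the set $Z\cap(\{\tau\}\times S^1)$ has exactly two points, $Z$ contains no fold point, and $Z$ has exactly two connected components, each meeting every circle $\{\tau\}\times S^1$, $\tau\in(0,1]$, in exactly one point. (B) If $1<\delta<\Phi$ and $0<\gamma<\gamma_+(\delta)$, then there are $0<\tau_1<\tau_2<1$ such that $Z\cap(\{\tau\}\times S^1)$ has exactly two points for $\tau\in(0,\tau_1)\cup(\tau_2,1]$, is the single point $(\tau,\pi/2)$ for $\tau\in\{\tau_1,\tau_2\}$, and is empty for $\tau\in(\tau_1,\tau_2)$; $(\tau_1,\pi/2)$ is a subcritical fold point and $(\tau_2,\pi/2)$ is a supercritical fold point; $Z$ has exactly two connected components, one contained in $\{\tau\le\tau_1\}$ and one in $\{\tau\ge\tau_2\}$. (C) If $\delta>\Phi$, then there is $\tau_0\in(0,1)$ such that $Z\cap(\{\tau\}\times S^1)$ is empty for $\tau<\tau_0$, is the single point $(\tau_0,\pi/2)$ for $\tau=\tau_0$, and has exactly two points for $\tau\in(\tau_0,1]$; $(\tau_0,\pi/2)$ is a supercritical fold point and $Z$ is connected.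
   Context: Let $S^1=\mathbb R/2\pi\mathbb Z$ and $\mathcal C=\{(\tau,s):0<\tau\le1,\ s\in S^1\}$. Let $p(\delta)=-\delta^2+\delta+1$, $\Phi=(1+\sqrt5)/2$. For parameters $\delta>1$, $\gamma>0$, $k>0$ define $g:\mathcal C\to\mathbb R$, $g(\tau,s)=\tau^{\delta^2}+\gamma\tau^{\delta^2-\delta}(1+k\sin s)-\tau$; thus $g(\tau,s)=0$ iff $\gamma(1+k\sin s)=\mathcal F_\delta(\tau)$, where $\mathcal F_\delta(\tau)=\tau^{p(\delta)}-\tau^\delta$. For $1<\delta<\Phi$, $M_{\mathcal F}(\delta)=\max_{(0,1]}\mathcal F_\delta>0$, and $\gamma_+(\delta)=M_{\mathcal F}(\delta)/(1+k)$. A fold point is a point $(\tau_0,s_0)\in\mathcal C$ with $g(\tau_0,s_0)=0$ and $\partial g/\partial s(\tau_0,s_0)=0$. It is supercritical if there is a neighbourhood $U$ of $(\tau_0,s_0)$ such that for $\tau>\tau_0$ close to $\tau_0$ the set $\{s:(\tau,s)\in U,\ g(\tau,s)=0\}$ has exactly two elements, for $\tau=\tau_0$ exactly one, and for $\tau<\tau_0$ close to $\tau_0$ none; subcritical if the same holds with the roles of $\tau>\tau_0$ and $\tau<\tau_0$ interchanged. *)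

From HB Require Import structures.
From mathcomp Require Import all_boot all_order all_algebra.
From mathcomp Require Import all_classical all_reals all_analysis.
Set Implicit Arguments. Unset Strict Implicit. Unset Printing Implicit Defensive.
Import Order.TTheory GRing.Theory Num.Theory.
Import numFieldNormedType.Exports.
Local Open Scope classical_set_scope.
Local Open Scope ring_scope.

Section Defs.
Variable R : realType.

Definition pdelta (d : R) : R := - d ^+ 2 + d + 1.

Definition Phi : R := (1 + Num.sqrt 5) / 2.

Definition Fdelta (d t : R) : R := t `^ (pdelta d) - t `^ d.

(* M_F(delta) = max_{(0,1]} F_delta, written as the supremum of the values
   (the paper asserts the max is attained). *)
Definition MF (d : R) : R := sup [set Fdelta d t | t in `]0, 1]].

Definition gamma_plus (k d : R) : R := MF d / (1 + k).

Definition gfun (d gam k : R) (t s : R) : R :=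
  t `^ (d ^+ 2) + gam * t `^ (d ^+ 2 - d) * (1 + k * sin s) - t.

(* The cylinder C = (0,1] x S^1, S^1 = R/2piZ, is realised homeomorphically
   inside R x R^2 by (tau, s mod 2pi) |-> (tau, (cos s, sin s)). *)
Definition emb (t s : R) : R * (R * R) := (t, (cos s, sin s)).

Definition Zs (d gam k : R) : set (R * (R * R)) :=
  [set q | exists t s, [/\ 0 < t <= 1, gfun d gam k t s = 0 & q = emb t s]].

Definition fiber (A : set (R * (R * R))) (t : R) : set (R * R) :=
  [set p | A (t, p)].

Definition two_points (X : set (R * R)) : Prop :=
  exists p1 p2, p1 <> p2 /\ X = [set p1; p2].

Definition one_point (X : set (R * R)) : Prop := exists p, X = [set p].

Definition fold_point (d gam k t0 s0 : R) : Prop :=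
  [/\ 0 < t0 <= 1, gfun d gam k t0 s0 = 0 &
      derive1 (fun s => gfun d gam k t0 s) s0 = 0].

Definition local_fiber (d gam k : R) (U : set (R * (R * R))) (t : R) :=
  [set p | Zs d gam k (t, p) /\ U (t, p)].

Definition supercritical_fold (d gam k t0 s0 : R) : Prop :=
  fold_point d gam k t0 s0 /\
  exists U, nbhs (emb t0 s0) U /\
  exists2 e : R, 0 < e &
    [/\ forall t, t0 < t < t0 + e -> two_points (local_fiber d gam k U t),
        one_point (local_fiber d gam k U t0) &
        forall t, t0 - e < t < t0 -> local_fiber d gam k U t = set0].

Definition subcritical_fold (d gam k t0 s0 : R) : Prop :=
  fold_point d gam k t0 s0 /\
  exists U, nbhs (emb t0 s0) U /\
  exists2 e : R, 0 < e &
    [/\ forall t, t0 - e < t < t0 -> two_points (local_fiber d gam k U t),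
        one_point (local_fiber d gam k U t0) &
        forall t, t0 < t < t0 + e -> local_fiber d gam k U t = set0].

Definition components (A : set (R * (R * R))) : set (set (R * (R * R))) :=
  [set connected_component A x | x in A].

End Defs.

From HB Require Import structures.
From mathcomp Require Import all_boot all_order all_algebra.
From mathcomp Require Import all_classical all_reals all_analysis.
From mathcomp Require Import ring lra.
Set Implicit Arguments. Unset Strict Implicit. Unset Printing Implicit Defensive.
Import Order.TTheory GRing.Theory Num.Theory.
Import numFieldNormedType.Exports.
Local Open Scope classical_set_scope.
Local Open Scope ring_scope.

(* Dividing [g] by [tau^(delta^2 - delta)] shows that [g(tau, s) = 0] iff
   [sin s = sinZ tau := (F_delta(tau)/gamma - 1)/k].  Hence the fiber of [Z]
   over [tau] has two points, one point ([s = pi/2]) or none according as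
   [F_delta(tau)] lies below, at or above the level [L = gamma (1 + k)], and [Z]
   is the union of the two continuous branches [tau |-> (tau, +-sqrt(1 - sinZ^2), sinZ)]
   over [{F_delta <= L}], which meet where [F_delta = L].  For [delta < Phi] the
   exponent [p(delta)] is positive and [F_delta] increases, then decreases on
   [(0, 1]], with maximum [M_F(delta)] at [(p/delta)^(1/(delta - p))]: the level is
   never reached when [gamma > gamma_+] and crossed twice when [gamma < gamma_+].
   For [delta > Phi], [p(delta) < 0] and [F_delta] decreases from [+oo] to [0],
   crossing the level once.  The components are then the (unions of) branches,
   separated by the sign of [cos s] or by a value of [tau]. *)

Section UnitCircle.
Variable R : realType.

Definition circle_at (y : R) : set (R * R) :=
  [set p | p.1 ^+ 2 + p.2 ^+ 2 = 1 /\ p.2 = y].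

Lemma circle_atE (y : R) : -1 < y < 1 ->
  circle_at y = [set (Num.sqrt (1 - y ^+ 2), y); (- Num.sqrt (1 - y ^+ 2), y)].
Proof.
move=> /andP[y1 y2]; have h : 0 <= 1 - y ^+ 2 by nra.
apply/seteqP; split => -[a b] /=.
- rewrite /circle_at /= => -[hab hb]; subst b.
  have ha : a ^+ 2 = 1 - y ^+ 2 by lra.
  have [a0|a0] := leP 0 a.
    by left; rewrite -ha sqrtr_sqr ger0_norm.
  by right; rewrite -ha sqrtr_sqr ltr0_norm // opprK.
- rewrite /circle_at /= => -[[-> ->]|[-> ->]]; split => //.
    by rewrite sqr_sqrtr //; lra.
  by rewrite sqrrN sqr_sqrtr //; lra.
Qed.

Lemma two_points_circle_at (y : R) : -1 < y < 1 -> two_points (circle_at y).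
Proof.
move=> hy; rewrite circle_atE //; eexists; eexists; split; last reflexivity.
case=> /eqP; rewrite -subr_eq0 opprK -mulr2n mulrn_eq0 /= sqrtr_eq0 => h.
case/andP: hy => y1 y2; nra.
Qed.

Lemma circle_at1 : circle_at 1 = [set (cos (pi / 2), sin (pi / 2))].
Proof.
rewrite cos_pihalf sin_pihalf; apply/seteqP; split => -[a b] /=.
- rewrite /circle_at /= => -[hab hb]; subst b; congr (_, _).
  by apply/eqP; rewrite -sqrf_eq0; apply/eqP; lra.
- move=> [-> ->]; rewrite /circle_at /=; split => //.
  by rewrite expr0n /= add0r expr1n.
Qed.

Lemma circle_at_le1 (y : R) : circle_at y !=set0 -> y <= 1.
Proof. by case=> -[a b] [/= hab <-]; have := sqr_ge0 a; nra. Qed.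

Lemma circle_at_gt1 (y : R) : 1 < y -> circle_at y = set0.
Proof.
move=> y1; apply/seteqP; split => // p Cp.
by have := circle_at_le1 (ex_intro _ p Cp); lra.
Qed.

Lemma unit_circle_angle (x y : R) : x ^+ 2 + y ^+ 2 = 1 ->
  exists s, cos s = x /\ sin s = y.
Proof.
move=> hxy; have hx : -1 <= x <= 1 by have := sqr_ge0 y => ?; apply/andP; split; nra.
have hs : Num.sqrt (1 - x ^+ 2) = `|y|.
  by rewrite -sqrtr_sqr; congr Num.sqrt; lra.
have [y0|y0] := leP 0 y.
  exists (acos x); split; first by rewrite acosK // in_itv.
  by rewrite sin_acos // hs ger0_norm.
exists (- acos x); split; first by rewrite cosN acosK // in_itv.
by rewrite sinN sin_acos // hs ltr0_norm // opprK.
Qed.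

End UnitCircle.

Section Fdelta.
Variables (R : realType) (d : R).
Hypothesis hd : 1 < d.

Local Notation p := (pdelta d).
Local Notation F := (Fdelta d).

Lemma pdelta_lt : p < d.
Proof. have := hd; rewrite /pdelta; nra. Qed.

Lemma sqrt5_spec : 0 <= Num.sqrt 5 :> R /\ Num.sqrt 5 ^+ 2 = 5 :> R.
Proof. by rewrite sqrtr_ge0 sqr_sqrtr. Qed.

Lemma pdelta_gt0 : d < Phi R -> 0 < p.
Proof. have := hd; rewrite /Phi /pdelta => ? h; have [] := sqrt5_spec; nra. Qed.

Lemma pdelta_lt0 : Phi R < d -> p < 0.
Proof. have := hd; rewrite /Phi /pdelta => ? h; have [] := sqrt5_spec; nra. Qed.

Lemma Fdelta_ge0 (t : R) : 0 < t <= 1 -> 0 <= F t.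
Proof.
by move=> ht; rewrite /Fdelta subr_ge0; apply: ger_powR => //; exact: ltW pdelta_lt.
Qed.

Lemma Fdelta1 : F 1 = 0.
Proof. by rewrite /Fdelta !powR1 subrr. Qed.

Lemma Fdelta_le_powR (t : R) : F t <= t `^ p.
Proof. by rewrite /Fdelta; have := powR_ge0 t d; lra. Qed.

Lemma is_derive_Fdelta (t : R) : 0 < t ->
  is_derive t 1 F (t `^ (p - 1) * (p - d * t `^ (d - p))).
Proof.
move=> t0; have -> : t `^ (p - 1) * (p - d * t `^ (d - p)) =
    p * t `^ (p - 1) - d * t `^ (d - 1).
  have -> : t `^ (d - 1) = t `^ (p - 1) * t `^ (d - p).
    by rewrite -powRD ?(gt_eqF t0) ?implybT //; congr (_ `^ _); ring.
  ring.
have -> : F = (@powR R ^~ p) - (@powR R ^~ d) by apply/funext.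
by apply: is_deriveB; exact: is_derive1_powR.
Qed.

Lemma continuous_Fdelta (t : R) : 0 < t -> {for t, continuous F}.
Proof.
move=> t0; apply/differentiable_continuous; rewrite -derivable1_diffP.
by have [] := is_derive_Fdelta t0.
Qed.

Lemma within_continuous_Fdelta (i : interval R) : {subset i <= `]0, +oo[} ->
  {within [set` i], continuous F}.
Proof.
move=> sub; apply: continuous_in_subspaceT => x /[1!inE] xi.
by apply: continuous_Fdelta; have := sub _ xi; rewrite in_itv /= andbT.
Qed.

Lemma derive1_Fdelta (t : R) : 0 < t ->
  derive1 F t = t `^ (p - 1) * (p - d * t `^ (d - p)).
Proof. by move=> t0; rewrite derive1E; have [_ ->] := is_derive_Fdelta t0. Qed.

Lemma Fdelta_decreasing : p < 0 -> {in `]0, 1] &, {homo F : x y /~ x < y}}.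
Proof.
move=> p0; apply: ltr0_derive1_lt_oc.
- by move=> x; rewrite in_itv /= => /andP[x0 _]; have [] := is_derive_Fdelta x0.
- move=> x; rewrite in_itv /= => /andP[x0 _]; rewrite derive1_Fdelta //.
  have := powR_gt0 (d - p) x0; have := hd => *.
  by rewrite pmulr_rlt0 ?powR_gt0 //; nra.
- by apply: within_continuous_Fdelta => x; rewrite !in_itv /= => /andP[-> _].
Qed.

(* [F'(t) = t^(p-1) (p - d t^(d-p))] vanishes exactly at [t^(d-p) = p/d]. *)
Definition Fdelta_argmax : R := (p / d) `^ (d - p)^-1.

Local Notation tm := Fdelta_argmax.

Section PositiveExponent.
Hypothesis p0 : 0 < p.

Lemma Fdelta_argmax_gt0 : 0 < tm.
Proof. by apply: powR_gt0; apply: divr_gt0 => //; have := hd; lra. Qed.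

Lemma Fdelta_argmax_pow : tm `^ (d - p) = p / d.
Proof.
have q0 : 0 < d - p by rewrite subr_gt0 pdelta_lt.
rewrite /tm -powRrM mulVf ?powRr1 ?gt_eqF //.
by apply: divr_ge0; have := hd; have := p0; lra.
Qed.

Lemma Fdelta_argmax_lt1 : tm < 1.
Proof.
have e0 : 0 < (d - p)^-1 by rewrite invr_gt0 subr_gt0 pdelta_lt.
have := @gt0_ltr_powR R _ e0 (p / d) 1.
have := hd => ?; have := p0 => ?; rewrite powR1; apply; rewrite ?nnegrE //.
  by apply: divr_ge0; lra.
by have := pdelta_lt; rewrite ltr_pdivrMr; lra.
Qed.

Lemma Fdelta_argmax_cmp (t : R) : 0 < t ->
  (t < tm -> p / d > t `^ (d - p)) /\ (tm < t -> p / d < t `^ (d - p)).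
Proof.
move=> t0; have q0 : 0 < d - p by rewrite subr_gt0 pdelta_lt.
have tm0 := Fdelta_argmax_gt0.
rewrite -Fdelta_argmax_pow; split => h;
  by apply: gt0_ltr_powR; rewrite ?nnegrE ?ltW.
Qed.

Lemma Fdelta_increasing_le_argmax : {in `]0, tm] &, {homo F : x y / x < y}}.
Proof.
apply: gtr0_derive1_lt_oc.
- by move=> x; rewrite in_itv /= => /andP[x0 _]; have [] := is_derive_Fdelta x0.
- move=> x; rewrite in_itv /= => /andP[x0 x1]; rewrite derive1_Fdelta //.
  have [+ _] := Fdelta_argmax_cmp x0 => /(_ x1) h.
  have := hd => ?; have := p0 => ?; have e : d * (p / d) = p by field; rewrite gt_eqF //; lra.
  by apply: mulr_gt0; [exact: powR_gt0 | nra].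
- by apply: within_continuous_Fdelta => x; rewrite !in_itv /= => /andP[-> _].
Qed.

Lemma Fdelta_decreasing_ge_argmax : {in `[tm, 1] &, {homo F : x y /~ x < y}}.
Proof.
have tm0 := Fdelta_argmax_gt0.
apply: ltr0_derive1_lt_cc.
- move=> x; rewrite in_itv /= => /andP[x0 _].
  by have [] := is_derive_Fdelta (lt_trans tm0 x0).
- move=> x; rewrite in_itv /= => /andP[x0 x1].
  have x0' : 0 < x by exact: lt_trans tm0 x0.
  rewrite derive1_Fdelta //; have [_ /(_ x0) h] := Fdelta_argmax_cmp x0'.
  have := hd => ?; have := p0 => ?; have e : d * (p / d) = p by field; rewrite gt_eqF //; lra.
  by rewrite pmulr_rlt0 ?powR_gt0 //; nra.
- apply: within_continuous_Fdelta => x; rewrite !in_itv /= => /andP[x0 _].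
  by rewrite andbT; exact: lt_le_trans tm0 x0.
Qed.

Lemma Fdelta_le_argmax (t : R) : 0 < t <= 1 -> F t <= F tm.
Proof.
move=> /andP[t0 t1]; have tm0 := Fdelta_argmax_gt0; have tm1 := Fdelta_argmax_lt1.
have [tlt|tge] := ltP t tm.
  by apply/ltW/Fdelta_increasing_le_argmax; rewrite ?in_itv /= ?t0 ?tm0 ?lexx ?ltW.
rewrite le_eqVlt in tge; case/orP: tge => [/eqP -> //|tgt].
by apply/ltW/Fdelta_decreasing_ge_argmax; rewrite ?in_itv /= ?t1 ?lexx ?ltW.
Qed.

Lemma MF_argmax : MF d = F tm.
Proof.
have tm_in : tm \in `]0, 1].
  by rewrite in_itv /= Fdelta_argmax_gt0; exact/ltW/Fdelta_argmax_lt1.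
have ub : ubound [set F t | t in `]0, 1]] (F tm).
  by move=> _ [t + <-]; rewrite /= in_itv /=; exact: Fdelta_le_argmax.
apply/eqP; rewrite eq_le; apply/andP; split.
  by apply: ge_sup; first by exists (F tm), tm.
by apply: sup_upper_bound; [split; [exists (F tm), tm | exists (F tm)] | exists tm].
Qed.

End PositiveExponent.

Section Level.
Variable L : R.
Hypothesis L0 : 0 < L.

Lemma Fdelta_IVT (a b : R) : 0 < a -> a <= b ->
  F a <= L <= F b \/ F b <= L <= F a -> exists2 t, t \in `[a, b] & F t = L.
Proof.
move=> a0 ab hL; apply: IVT => //.
  apply: within_continuous_Fdelta => x; rewrite !in_itv /= => /andP[ax _].
  by rewrite andbT; exact: lt_le_trans ax.
by case: hL => /andP[h1 h2]; rewrite ge_min le_max h1 h2 ?orbT.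
Qed.

Lemma Fdelta_lt_level : 0 < p -> MF d < L -> forall t, 0 < t <= 1 -> F t < L.
Proof. by move=> p0; rewrite MF_argmax // => hM t /(Fdelta_le_argmax p0)/le_lt_trans; apply. Qed.

Lemma Fdelta_lt_level_near0 : 0 < p -> exists2 e, 0 < e < tm & F e < L.
Proof.
move=> p0; have tm0 := Fdelta_argmax_gt0 p0.
set e := Num.min (tm / 2) ((L / 2) `^ p^-1).
have e0 : 0 < e by rewrite lt_min divr_gt0 //= powR_gt0 // divr_gt0.
have e_tm2 : e <= tm / 2 by rewrite /e ge_min lexx.
exists e; first by rewrite e0 /=; lra.
apply: le_lt_trans (Fdelta_le_powR e) _.
have : e `^ p <= ((L / 2) `^ p^-1) `^ p.
  apply: ge0_ler_powR; rewrite ?nnegrE ?(ltW p0) ?(ltW e0) ?powR_ge0 //.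
  by rewrite /e ge_min lexx orbT.
have := L0 => ?; rewrite -powRrM mulVf ?gt_eqF // powRr1; last by apply: divr_ge0; lra.
lra.
Qed.

Lemma Fdelta_gt_level_near0 : p < 0 -> exists2 t, 0 < t <= 1 & L < F t.
Proof.
move=> p0; have := L0 => ?; set t := (L + 2) `^ p^-1.
have t0 : 0 < t by apply: powR_gt0; lra.
have t1 : t <= 1.
  apply: (@le_trans _ _ ((L + 2) `^ 0)); last by rewrite powRr0.
  by apply: ler_powR; [lra | rewrite invr_le0; exact: ltW].
exists t; first by rewrite t0.
rewrite /Fdelta /t -powRrM mulVf ?lt_eqF // powRr1; last lra.
have : t `^ d <= 1 `^ d by apply: ge0_ler_powR; rewrite ?nnegrE ?(ltW t0) //; have := hd; lra.
by rewrite powR1 /t; lra.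
Qed.

Lemma Fdelta_two_crossings : 0 < p -> L < MF d ->
  exists t1 t2 : R, [/\ 0 < t1, t1 < t2 & t2 < 1] /\
   [/\ forall t, 0 < t < t1 -> F t < L, F t1 = L,
       forall t, t1 < t < t2 -> L < F t, F t2 = L &
       forall t, t2 < t <= 1 -> F t < L].
Proof.
move=> p0; rewrite MF_argmax // => HFtm; have := L0 => ?.
have tm0 := Fdelta_argmax_gt0 p0; have tm1 := Fdelta_argmax_lt1 p0.
have [e /andP[e0 etm] Fe] := Fdelta_lt_level_near0 p0.
have [t1 /[!in_itv]/= /andP[et1 t1tm] Ft1] : exists2 t1, t1 \in `[e, tm] & F t1 = L.
  by apply: Fdelta_IVT; [lra | lra | left; apply/andP; split; lra].
have [t2 /[!in_itv]/= /andP[tmt2 t21] Ft2] : exists2 t2, t2 \in `[tm, 1] & F t2 = L.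
  by apply: Fdelta_IVT; [lra | lra | rewrite Fdelta1; right; apply/andP; split; lra].
have t1tm' : t1 < tm.
  by rewrite lt_neqAle t1tm andbT; apply/eqP => h; move: HFtm; rewrite -h; lra.
have tmt2' : tm < t2.
  by rewrite lt_neqAle tmt2 andbT; apply/eqP => h; move: HFtm; rewrite h; lra.
have t21' : t2 < 1.
  by rewrite lt_neqAle t21 andbT; apply/eqP => h; move: Ft2; rewrite h Fdelta1; lra.
have incr := Fdelta_increasing_le_argmax p0; have decr := Fdelta_decreasing_ge_argmax p0.
exists t1, t2; split; first by split => //; lra.
split => // t.
- by move=> /andP[t0 tt1]; rewrite -Ft1; apply: incr; rewrite ?in_itv /= ?t0; lra.
- move=> /andP[tt1 tt2]; have [ttm|ttm] := leP t tm.
    by rewrite -Ft1; apply: incr; rewrite ?in_itv /=; lra.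
  by rewrite -Ft2; apply: decr; rewrite ?in_itv /=; lra.
- by move=> /andP[tt2 t1']; rewrite -Ft2; apply: decr; rewrite ?in_itv /=; lra.
Qed.

Lemma Fdelta_one_crossing : p < 0 ->
  exists t0 : R, 0 < t0 < 1 /\
   [/\ forall t, 0 < t < t0 -> L < F t, F t0 = L & forall t, t0 < t <= 1 -> F t < L].
Proof.
move=> p0; have := L0 => ?.
have [ta /andP[ta0 ta1] Fta] := Fdelta_gt_level_near0 p0.
have [t0 /[!in_itv]/= /andP[tat0 t01] Ft0] : exists2 t0, t0 \in `[ta, 1] & F t0 = L.
  by apply: Fdelta_IVT; [lra | lra | rewrite Fdelta1; right; apply/andP; split; lra].
have t01' : t0 < 1.
  by rewrite lt_neqAle t01 andbT; apply/eqP => h; move: Ft0; rewrite h Fdelta1; lra.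
have decr := Fdelta_decreasing p0.
exists t0; split; first by apply/andP; split; lra.
split => // t /andP[ta' tb]; rewrite -Ft0; apply: decr; rewrite ?in_itv /=; lra.
Qed.

End Level.

End Fdelta.

Section SeparatedComponents.
Variable T : topologicalType.
Implicit Types P Q V Z : set T.

Lemma closure_disjoint_open P Q V : open V -> Q `<=` V -> P `&` V = set0 ->
  closure P `&` Q = set0.
Proof.
move=> oV QV PV; rewrite -subset0 => y [Py Qy].
have [z Pz] : P `&` V !=set0 by apply: Py; apply: open_nbhs_nbhs; split => //; exact: QV.
by rewrite PV in Pz.
Qed.

Lemma separated_by_continuous (R : realType) (f : T -> R) (m : R) P Q :
  continuous f -> (forall x, P x -> f x < m) -> (forall x, Q x -> m < f x) ->
  separated P Q.
Proof.
move=> cf Pf Qf.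
have disj A B : (forall x, A x -> B x -> False) -> A `&` B = set0.
  by move=> AB; rewrite -subset0 => x [Ax Bx]; exact: AB Ax Bx.
rewrite /separated; split.
- apply: (closure_disjoint_open (V := f @^-1` [set y | m < y])) => //.
  + by apply: open_comp => [x _|]; [exact: cf | exact: open_gt].
  + by apply: disj => x /Pf /= h1 h2; lra.
- rewrite setIC; apply: (closure_disjoint_open (V := f @^-1` [set y | y < m])) => //.
  + by apply: open_comp => [x _|]; [exact: cf | exact: open_lt].
  + by apply: disj => x /Qf /= h1 h2; lra.
Qed.

Lemma connected_component_separated Z P Q x : Z = P `|` Q -> connected P ->
  separated P Q -> P x -> connected_component Z x = P.
Proof.
move=> ZPQ cP sPQ Px; apply/seteqP; split; last first.
  by apply: connected_component_max => //; rewrite ZPQ; exact: subsetUl.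
have Zx : Z x by rewrite ZPQ; left.
have := connected_subset sPQ _ (@component_connected T Z x).
rewrite -ZPQ => /(_ (@connected_component_sub T Z x)) [//|CQ].
suff : (P `&` Q) x by rewrite (separated_disjoint sPQ).
by split => //; apply: CQ; exact: connected_component_refl.
Qed.

Lemma components_separated_pair Z P Q : Z = P `|` Q -> P !=set0 -> Q !=set0 ->
  connected P -> connected Q -> separated P Q ->
  P <> Q /\ [set connected_component Z x | x in Z] = [set P; Q].
Proof.
move=> ZPQ [xp Pxp] [xq Qxq] cP cQ sPQ.
have ZQP : Z = Q `|` P by rewrite setUC.
have sQP : separated Q P by rewrite separatedC.
split.
  move=> ePQ; suff : (P `&` Q) xp by rewrite (separated_disjoint sPQ).
  by split; last rewrite -ePQ.
apply/seteqP; split.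
  move=> _ [x + <-]; rewrite {1}ZPQ => -[Px|Qx].
    by left; exact: connected_component_separated ZPQ cP sPQ Px.
  by right; exact: connected_component_separated ZQP cQ sQP Qx.
move=> _ [->|->].
  by exists xp; [rewrite ZPQ; left | exact: connected_component_separated ZPQ cP sPQ Pxp].
by exists xq; [rewrite ZPQ; right | exact: connected_component_separated ZQP cQ sQP Qxq].
Qed.

End SeparatedComponents.

Section ZeroSet.
Variables (R : realType) (k gam d : R).
Hypotheses (hk : 1 < k) (hg : 0 < gam) (hd : 1 < d).

Local Notation F := (Fdelta d).
Local Notation L := (gam * (1 + k)).
Local Notation Z := (Zs d gam k).

Definition sinZ (t : R) : R := (F t / gam - 1) / k.

Lemma gfunE (t s : R) : 0 < t ->
  gfun d gam k t s = t `^ (d ^+ 2 - d) * (gam * (1 + k * sin s) - F t).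
Proof.
move=> t0.
have tD a b : t `^ a * t `^ b = t `^ (a + b) by rewrite -powRD // (gt_eqF t0) implybT.
have e1 : t `^ (d ^+ 2 - d) * t `^ d = t `^ (d ^+ 2) by rewrite tD subrK.
have e2 : t `^ (d ^+ 2 - d) * t `^ (pdelta d) = t.
  by rewrite tD [X in t `^ X](_ : _ = 1) ?powRr1 ?ltW // /pdelta; ring.
rewrite /gfun /Fdelta -e1; set A := t `^ (d ^+ 2 - d); set C := t `^ pdelta d.
by rewrite -[X in _ - X = _]e2 -/A -/C; ring.
Qed.

Lemma gfun_eq0 (t s : R) : 0 < t -> gfun d gam k t s = 0 <-> sin s = sinZ t.
Proof.
move=> t0; have := hk => ?; have := hg => ?.
rewrite gfunE // /sinZ; have tp := powR_gt0 (d ^+ 2 - d) t0.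
split => [/eqP|->]; last by apply/eqP; rewrite mulf_eq0; apply/orP; right;
  apply/eqP; field; rewrite !gt_eqF //; lra.
rewrite mulf_eq0 (gt_eqF tp) /= subr_eq0 => /eqP <-.
by field; rewrite !gt_eqF //; lra.
Qed.

Lemma ZsP (t x y : R) : Z (t, (x, y)) <->
  [/\ 0 < t <= 1, x ^+ 2 + y ^+ 2 = 1 & y = sinZ t].
Proof.
split.
- case=> t' [s [/andP[t0 t1] g0 [-> -> ->]]].
  by split; [rewrite t0 t1 | exact: cos2Dsin2 | exact/gfun_eq0].
- case=> /andP[t0 t1] hxy hy; have [s [hc hs]] := unit_circle_angle hxy.
  exists t, s; split; first by rewrite t0 t1.
    by apply/gfun_eq0 => //; rewrite hs.
  by rewrite /emb hc hs.
Qed.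

Lemma fiber_Zs (t : R) : 0 < t <= 1 -> fiber Z t = circle_at (sinZ t).
Proof.
move=> ht; apply/seteqP; split => -[x y]; rewrite /fiber /circle_at /=.
- by move/ZsP => [].
- by move=> [h1 h2]; apply/ZsP.
Qed.

Lemma fiber_Zs_out (t : R) : ~ (0 < t <= 1) -> fiber Z t = set0.
Proof. by move=> ht; apply/seteqP; split => -[x y] //= /ZsP[]. Qed.

Lemma derive1_gfun (t s : R) :
  derive1 (fun s => gfun d gam k t s) s = gam * t `^ (d ^+ 2 - d) * k * cos s.
Proof.
have -> : (fun s => gfun d gam k t s) = cst (t `^ (d ^+ 2) + gam * t `^ (d ^+ 2 - d) - t)
    + (gam * t `^ (d ^+ 2 - d) * k) \*: (@sin R).
  by apply/funext => u; rewrite /gfun !fctE /cst /=; rewrite /GRing.scale /=; ring.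
by rewrite derive1E derive_val add0r.
Qed.

Lemma sinZ_sub1 (t : R) : sinZ t - 1 = (F t - L) / (gam * k).
Proof. by have := hk => ?; have := hg => ?; rewrite /sinZ; field; rewrite !gt_eqF //; lra. Qed.

Lemma gk_gt0 : 0 < gam * k.
Proof. by have := hk => ?; have := hg => ?; apply: mulr_gt0; lra. Qed.

Lemma level_gt0 : 0 < L.
Proof. by have := hk => ?; have := hg => ?; apply: mulr_gt0; lra. Qed.

Lemma sinZ_lt1 (t : R) : (sinZ t < 1) = (F t < L).
Proof. by rewrite -subr_lt0 sinZ_sub1 pmulr_llt0 ?invr_gt0 ?gk_gt0 // subr_lt0. Qed.

Lemma sinZ_le1 (t : R) : (sinZ t <= 1) = (F t <= L).
Proof. by rewrite -subr_le0 sinZ_sub1 pmulr_lle0 ?invr_gt0 ?gk_gt0 // subr_le0. Qed.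

Lemma sinZ_gt1 (t : R) : (1 < sinZ t) = (L < F t).
Proof. by rewrite ltNge sinZ_le1 -ltNge. Qed.

Lemma sinZ_eq1 (t : R) : F t = L -> sinZ t = 1.
Proof. by move=> FL; apply/eqP; rewrite -subr_eq0 sinZ_sub1 FL subrr mul0r. Qed.

Lemma sinZ_gtN1 (t : R) : 0 <= F t -> -1 < sinZ t.
Proof.
move=> F0; have := hk => ?; have := hg => ?.
have := sinZ_sub1 t; set u := _ / _ => e.
have hu : u * (gam * k) = F t - L by rewrite /u divfK // gt_eqF // gk_gt0.
have := gk_gt0; nra.
Qed.

Lemma fiber_Zs_two (t : R) : 0 < t <= 1 -> F t < L -> two_points (fiber Z t).
Proof.
move=> ht FL; rewrite fiber_Zs //; apply: two_points_circle_at.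
by rewrite sinZ_lt1 FL sinZ_gtN1 // Fdelta_ge0.
Qed.

Lemma fiber_Zs_pihalf (t : R) : 0 < t <= 1 -> F t = L ->
  fiber Z t = [set (cos (pi / 2), sin (pi / 2))].
Proof. by move=> ht FL; rewrite fiber_Zs // sinZ_eq1 // circle_at1. Qed.

Lemma fiber_Zs0 (t : R) : L < F t -> fiber Z t = set0.
Proof.
move=> LF; have [ht|ht] := pselect (0 < t <= 1); last exact: fiber_Zs_out.
by rewrite fiber_Zs // circle_at_gt1 // sinZ_gt1.
Qed.

Lemma Zs_level (t x y : R) : Z (t, (x, y)) -> F t <= L.
Proof.
move=> /ZsP[ht hxy hy]; rewrite -sinZ_le1 -hy.
by apply: circle_at_le1; exists (x, y).
Qed.

Definition branch (s t : R) : R * (R * R) := (t, (s * Num.sqrt (1 - sinZ t ^+ 2), sinZ t)).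

Definition branches (i : interval R) : set (R * (R * R)) :=
  branch 1 @` [set` i] `|` branch (-1) @` [set` i].

Lemma Zs_branch (s t : R) : s ^+ 2 = 1 -> 0 < t <= 1 -> F t <= L -> Z (branch s t).
Proof.
move=> hs ht FL; apply/ZsP; split => //.
have h1 : sinZ t <= 1 by rewrite sinZ_le1.
have h2 := sinZ_gtN1 (Fdelta_ge0 hd ht).
by rewrite exprMn hs mul1r sqr_sqrtr; [ring | nra].
Qed.

Lemma Zs_branchP (q : R * (R * R)) : Z q -> q = branch 1 q.1 \/ q = branch (-1) q.1.
Proof.
case: q => t [x y] /ZsP[ht hxy hy]; rewrite /branch /= -hy.
have -> : Num.sqrt (1 - y ^+ 2) = `|x| by rewrite -sqrtr_sqr; congr Num.sqrt; lra.
have [x0|x0] := leP 0 x; first by left; rewrite mul1r ger0_norm.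
by right; rewrite mulN1r ltr0_norm // opprK.
Qed.

Lemma continuous_sinZ (t : R) : 0 < t -> {for t, continuous sinZ}.
Proof.
move=> t0; apply: cvgMr_tmp; apply: cvgB; last exact: cvg_cst.
by apply: cvgMr_tmp; exact: continuous_Fdelta.
Qed.

Lemma continuous_branch (s t : R) : 0 < t -> {for t, continuous (branch s)}.
Proof.
move=> t0; have cs := continuous_sinZ t0.
apply: (cvg_pair cvg_id (cvg_pair _ cs)); apply: cvgMl_tmp.
apply: (continuous_comp (f := fun x => 1 - sinZ x ^+ 2)); last exact: sqrt_continuous.
by apply: cvgB; [exact: cvg_cst | exact: cvgM].
Qed.

Lemma connected_branch (s : R) (i : interval R) : {subset i <= `]0, +oo[} ->
  connected (branch s @` [set` i]).
Proof.
move=> sub; apply: connected_continuous_connected.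
  by apply/connected_intervalP; exact: interval_is_interval.
apply: continuous_in_subspaceT => x /[1!inE] xi; apply: continuous_branch.
by have := sub _ xi; rewrite in_itv /= andbT.
Qed.

Lemma fiber_branch (s : R) (i : interval R) (t : R) : t \in i ->
  fiber (branch s @` [set` i]) t = [set (s * Num.sqrt (1 - sinZ t ^+ 2), sinZ t)].
Proof.
move=> ti; apply/seteqP; split => -[x y]; rewrite /fiber /=.
- by case=> t' t'i [<- <- <-].
- by case=> -> ->; exists t.
Qed.

Lemma branches_fst (i : interval R) (q : R * (R * R)) : branches i q -> q.1 \in i.
Proof. by case=> -[t ti <-]. Qed.

Lemma connected_branches (i : interval R) (t : R) : {subset i <= `]0, +oo[} ->
  t \in i -> F t = L -> connected (branches i).
Proof.
move=> sub ti FL; apply: connectedU; [|exact: connected_branch|exact: connected_branch].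
exists (branch 1 t); split; first by exists t.
by exists t => //; rewrite /branch sinZ_eq1 // expr1n subrr sqrtr0 !mulr0.
Qed.

Lemma Zs_branches (i j : interval R) :
  [set t | 0 < t <= 1 /\ F t <= L] = [set` i] `|` [set` j] ->
  Z = branches i `|` branches j.
Proof.
move=> level; have sq1 s : s = 1 \/ s = -1 -> s ^+ 2 = 1.
  by case=> ->; rewrite ?sqrrN expr1n.
apply/seteqP; split.
- move=> q Zq; have qij : ([set` i] `|` [set` j]) q.1.
    rewrite -level; case: q Zq => t [x y] Zq.
    by split; [case/ZsP: Zq | exact: Zs_level Zq].
  by have [->|->] := Zs_branchP Zq; case: qij => qi;
    [left; left | right; left | left; right | right; right]; exists q.1.
- have inlevel (I : interval R) t : [set` I] `<=` [set t | 0 < t <= 1 /\ F t <= L] ->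
      t \in I -> Z (branch 1 t) /\ Z (branch (-1) t).
    by move=> IL /IL[ht FL]; split; apply: Zs_branch => //; apply: sq1; [left|right].
  have [iL jL] : [set` i] `<=` [set t | 0 < t <= 1 /\ F t <= L] /\
      [set` j] `<=` [set t | 0 < t <= 1 /\ F t <= L].
    by rewrite level; split => t ht; [left|right].
  by move=> q [[] [t ti <-]|[] [t tj <-]];
    [exact: (inlevel _ _ iL ti).1 | exact: (inlevel _ _ iL ti).2
    |exact: (inlevel _ _ jL tj).1 | exact: (inlevel _ _ jL tj).2].
Qed.

Lemma fold_point_sinZ (t s : R) : fold_point d gam k t s -> sinZ t ^+ 2 = 1.
Proof.
move=> [/andP[t0 _] /(gfun_eq0 _ t0) <-]; rewrite derive1_gfun => /eqP.
have k0 : 0 < k by have := hk; lra.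
rewrite !mulf_eq0 (gt_eqF hg) (gt_eqF (powR_gt0 _ t0)) (gt_eqF k0) /= => /eqP c0.
by have := cos2Dsin2 s; rewrite c0 expr0n add0r.
Qed.

Lemma fold_point_pihalf (t : R) : 0 < t <= 1 -> F t = L -> fold_point d gam k t (pi / 2).
Proof.
move=> ht FL; split => //; last by rewrite derive1_gfun cos_pihalf mulr0.
by apply/gfun_eq0; [case/andP: ht | rewrite sin_pihalf sinZ_eq1].
Qed.

Lemma local_fiber_setT (t : R) : local_fiber d gam k setT t = fiber Z t.
Proof. by apply/seteqP; split => x /=; [case|]. Qed.

(* A fold may be witnessed with the whole space as neighbourhood [U], so the
   global fibers decide its type. *)
Lemma supercritical_fold_global (t0 s0 e : R) : fold_point d gam k t0 s0 -> 0 < e ->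
  (forall t, t0 < t < t0 + e -> two_points (fiber Z t)) -> one_point (fiber Z t0) ->
  (forall t, t0 - e < t < t0 -> fiber Z t = set0) -> supercritical_fold d gam k t0 s0.
Proof.
move=> fold e0 two one none; split => //; exists setT; split; first exact: filterT.
by exists e => //; rewrite local_fiber_setT; split => // t ht; rewrite local_fiber_setT; auto.
Qed.

Lemma subcritical_fold_global (t0 s0 e : R) : fold_point d gam k t0 s0 -> 0 < e ->
  (forall t, t0 - e < t < t0 -> two_points (fiber Z t)) -> one_point (fiber Z t0) ->
  (forall t, t0 < t < t0 + e -> fiber Z t = set0) -> subcritical_fold d gam k t0 s0.
Proof.
move=> fold e0 two one none; split => //; exists setT; split; first exact: filterT.
by exists e => //; rewrite local_fiber_setT; split => // t ht; rewrite local_fiber_setT; auto.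
Qed.

Lemma gamma_plus_ltE : (gamma_plus k d < gam) = (MF d < L).
Proof. by rewrite /gamma_plus ltr_pdivrMr ?(mulrC gam) //; have := hk; lra. Qed.

Lemma gamma_plus_gtE : (gam < gamma_plus k d) = (L < MF d).
Proof. by rewrite /gamma_plus ltr_pdivlMr ?(mulrC gam) //; have := hk; lra. Qed.

Lemma components_two_branches : (forall t, 0 < t <= 1 -> F t < L) ->
  exists A B, [/\ A <> B, components Z = [set A; B],
    (forall t, 0 < t <= 1 -> one_point (fiber A t)) &
    (forall t, 0 < t <= 1 -> one_point (fiber B t))].
Proof.
move=> FL; set A := branch (-1) @` [set` `]0, 1]]; set B := branch 1 @` [set` `]0, 1]].
exists A, B.
have sub : {subset (`]0, 1] : interval R) <= `]0, +oo[}.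
  by move=> x; rewrite !in_itv /= => /andP[-> _].
have Zeq : Z = A `|` B.
  rewrite setUC -[B `|` A]/(branches `]0, 1]) -[RHS]setUid; apply: Zs_branches.
  rewrite setUid; apply/seteqP; split => t /=; rewrite in_itv /=; first by case.
  by move=> ht; split; last exact/ltW/FL.
have sqrt_gt0 t : t \in `]0, 1] -> 0 < Num.sqrt (1 - sinZ t ^+ 2).
  rewrite in_itv /= sqrtr_gt0 => ht; have := FL t ht; rewrite -sinZ_lt1.
  have := sinZ_gtN1 (Fdelta_ge0 hd ht); nra.
have i1 : (1 : R) \in `]0, 1] by rewrite in_itv /= ltr01 lexx.
have sAB : separated A B.
  apply: (@separated_by_continuous _ _ (fun q : R * (R * R) => q.2.1) 0).
  - by move=> q; apply: (continuous_comp (f := snd)); [exact: cvg_snd | exact: cvg_fst].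
  - by move=> _ [t ti <-]; rewrite /= mulN1r oppr_lt0; exact: sqrt_gt0.
  - by move=> _ [t ti <-]; rewrite /= mul1r; exact: sqrt_gt0.
have nA : A !=set0 by exists (branch (-1) 1), 1.
have nB : B !=set0 by exists (branch 1 1), 1.
have [AB compZ] := components_separated_pair Zeq nA nB (connected_branch sub)
  (connected_branch sub) sAB.
by split => // t ht; rewrite fiber_branch ?in_itv //; eexists.
Qed.

Lemma components_two_bands (t1 t2 : R) : 0 < t1 -> t1 < t2 -> t2 <= 1 ->
  F t1 = L -> F t2 = L ->
  [set t | 0 < t <= 1 /\ F t <= L] = [set` `]0, t1]] `|` [set` `[t2, 1]] ->
  exists A B, [/\ A <> B, components Z = [set A; B],
    A `<=` [set q | q.1 <= t1] & B `<=` [set q | t2 <= q.1]].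
Proof.
move=> t10 t12 t21 Ft1 Ft2 level.
exists (branches `]0, t1]), (branches `[t2, 1]).
have i1 : t1 \in `]0, t1] by rewrite in_itv /= t10 lexx.
have i2 : t2 \in `[t2, 1] by rewrite in_itv /= lexx t21.
have sAB : separated (branches `]0, t1]) (branches `[t2, 1]).
  apply: (@separated_by_continuous _ _ fst ((t1 + t2) / 2)); first by move=> q; exact: cvg_fst.
    by move=> q /branches_fst; rewrite in_itv /= => /andP[_ ?]; lra.
  by move=> q /branches_fst; rewrite in_itv /= => /andP[? _]; lra.
have nA : branches `]0, t1] !=set0 by exists (branch 1 t1); left; exists t1.
have nB : branches `[t2, 1] !=set0 by exists (branch 1 t2); left; exists t2.
have cA : connected (branches `]0, t1]).
  by apply: connected_branches i1 Ft1 => x; rewrite !in_itv /= => /andP[-> _].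
have cB : connected (branches `[t2, 1]).
  by apply: connected_branches i2 Ft2 => x; rewrite !in_itv /= andbT => /andP[? _]; lra.
have [AB compZ] := components_separated_pair (Zs_branches level) nA nB cA cB sAB.
by split => // q /branches_fst; rewrite in_itv /= => /andP[].
Qed.

Lemma Zs_above_gamma_plus : d < Phi R -> gamma_plus k d < gam ->
  [/\ (forall t, 0 < t <= 1 -> two_points (fiber Z t)),
      (forall t s, ~ fold_point d gam k t s) &
      exists A B, [/\ A <> B, components Z = [set A; B],
        (forall t, 0 < t <= 1 -> one_point (fiber A t)) &
        (forall t, 0 < t <= 1 -> one_point (fiber B t))]].
Proof.
move=> hp; rewrite gamma_plus_ltE => hM.
have FL := Fdelta_lt_level hd (pdelta_gt0 hd hp) hM.
split; [by move=> t ht; exact: fiber_Zs_two (FL t ht) | | exact: components_two_branches].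
move=> t s fold; have [ht _ _] := fold; have := fold_point_sinZ fold.
have := FL t ht; rewrite -sinZ_lt1; have := sinZ_gtN1 (Fdelta_ge0 hd ht); nra.
Qed.

Lemma Zs_below_gamma_plus : d < Phi R -> gam < gamma_plus k d ->
  exists t1 t2, [/\ 0 < t1, t1 < t2 & t2 < 1] /\
    [/\ (forall t, (0 < t < t1) \/ (t2 < t <= 1) -> two_points (fiber Z t)),
    (forall t, t = t1 \/ t = t2 -> fiber Z t = [set (cos (pi / 2), sin (pi / 2))]) &
    (forall t, t1 < t < t2 -> fiber Z t = set0)] /\
    subcritical_fold d gam k t1 (pi / 2) /\
    supercritical_fold d gam k t2 (pi / 2) /\
    exists A B, [/\ A <> B, components Z = [set A; B],
      A `<=` [set q | q.1 <= t1] & B `<=` [set q | t2 <= q.1]].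
Proof.
move=> hp; rewrite gamma_plus_gtE => hM.
have [t1 [t2 [[t10 t12 t21] [F1 Ft1 F2 Ft2 F3]]]] :=
  Fdelta_two_crossings hd level_gt0 (pdelta_gt0 hd hp) hM.
have two t : (0 < t < t1) \/ (t2 < t <= 1) -> two_points (fiber Z t).
  case=> /andP[ta tb]; (apply: fiber_Zs_two; first by apply/andP; lra).
    exact/F1/andP.
  exact/F3/andP.
have one t : t = t1 \/ t = t2 -> fiber Z t = [set (cos (pi / 2), sin (pi / 2))].
  by case=> ->; apply: fiber_Zs_pihalf => //; apply/andP; lra.
have none t : t1 < t < t2 -> fiber Z t = set0 by move/F2; exact: fiber_Zs0.
exists t1, t2; split => //; split; first by split.
split.
  have [m1 m2] : Num.min t1 (t2 - t1) <= t1 /\ Num.min t1 (t2 - t1) <= t2 - t1.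
    by rewrite !ge_min !lexx orbT.
  apply: (subcritical_fold_global (e := Num.min t1 (t2 - t1))).
  - by apply: fold_point_pihalf => //; apply/andP; lra.
  - by rewrite lt_min t10 subr_gt0.
  - by move=> t /andP[ta tb]; apply: two; left; apply/andP; lra.
  - by rewrite one; [eexists | left].
  - by move=> t /andP[ta tb]; apply: none; apply/andP; lra.
split.
  have [m1 m2] : Num.min (t2 - t1) (1 - t2) <= t2 - t1 /\ Num.min (t2 - t1) (1 - t2) <= 1 - t2.
    by rewrite !ge_min !lexx orbT.
  apply: (supercritical_fold_global (e := Num.min (t2 - t1) (1 - t2))).
  - by apply: fold_point_pihalf => //; apply/andP; lra.
  - by rewrite lt_min !subr_gt0 t12 t21.
  - by move=> t /andP[ta tb]; apply: two; right; apply/andP; lra.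
  - by rewrite one; [eexists | right].
  - by move=> t /andP[ta tb]; apply: none; apply/andP; lra.
apply: components_two_bands => //; first exact: ltW.
apply/seteqP; split => t /=; rewrite !in_itv /=.
- case=> /andP[t0 t1'] FL; have [tt1|tt1] := leP t t1; first by left; rewrite t0.
  right; rewrite t1' andbT; have [//|tt2] := leP t2 t.
  by have := F2 t; rewrite tt1 tt2 => /(_ isT); lra.
- case=> /andP[ta tb]; (split; first by apply/andP; lra).
    have [tt1|tt1] := ltP t t1; first exact/ltW/F1/andP.
    have -> : t = t1 by lra.
    by rewrite Ft1.
  have [tt2|tt2] := ltP t2 t; first exact/ltW/F3/andP.
  have -> : t = t2 by lra.
  by rewrite Ft2.
Qed.

Lemma Zs_beyond_golden_ratio : Phi R < d ->
  exists t0, 0 < t0 < 1 /\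
    [/\ (forall t, t < t0 -> fiber Z t = set0),
    fiber Z t0 = [set (cos (pi / 2), sin (pi / 2))],
    (forall t, t0 < t <= 1 -> two_points (fiber Z t)),
    supercritical_fold d gam k t0 (pi / 2) &
    connected Z].
Proof.
move=> hp; have [t0 [/andP[t00 t01] [F1 Ft0 F3]]] :=
  Fdelta_one_crossing hd level_gt0 (pdelta_lt0 hd hp).
have two t : t0 < t <= 1 -> two_points (fiber Z t).
  by move=> /andP[ta tb]; apply: fiber_Zs_two; [apply/andP; lra | apply/F3/andP].
have one : fiber Z t0 = [set (cos (pi / 2), sin (pi / 2))].
  by apply: fiber_Zs_pihalf => //; apply/andP; lra.
have none t : t < t0 -> fiber Z t = set0.
  move=> tt0; have [t0'|t0'] := leP t 0; first by apply: fiber_Zs_out => /andP[]; lra.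
  by apply/fiber_Zs0/F1/andP.
exists t0; split; first by apply/andP.
split => //.
  apply: (supercritical_fold_global (e := 1 - t0)); rewrite ?subr_gt0 //.
  - by apply: fold_point_pihalf => //; apply/andP; lra.
  - by move=> t /andP[ta tb]; apply: two; apply/andP; lra.
  - by rewrite one; eexists.
  - by move=> t /andP[ta tb]; apply: none.
have it0 : t0 \in `[t0, 1] by rewrite in_itv /= lexx ltW.
rewrite (Zs_branches (i := `[t0, 1]) (j := `[t0, 1])) setUid.
  by apply: connected_branches it0 Ft0 => x; rewrite !in_itv /= andbT => /andP[? _]; lra.
apply/seteqP; split => t /=; rewrite !in_itv /=.
- case=> /andP[t0' t1] FL; rewrite t1 andbT; have [//|tt0] := leP t0 t.
  by have := F1 t; rewrite t0' tt0 => /(_ isT); lra.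
- case/andP=> ta tb; split; first by apply/andP; lra.
  have [tt0|tt0] := ltP t0 t; first exact/ltW/F3/andP.
  have -> : t = t0 by lra.
  by rewrite Ft0.
Qed.

End ZeroSet.

Unset Implicit Arguments.
Theorem mainTheorem2 (R : realType) (k gam d : R) :
  1 < k -> 0 < gam -> 1 < d ->
  (* (A) *)
  ((d < Phi R /\ gamma_plus k d < gam) ->
     [/\ (forall t, 0 < t <= 1 -> two_points (fiber (Zs d gam k) t)),
         (forall t s, ~ fold_point d gam k t s) &
         exists A B, [/\ A <> B, components (Zs d gam k) = [set A; B],
           (forall t, 0 < t <= 1 -> one_point (fiber A t)) &
           (forall t, 0 < t <= 1 -> one_point (fiber B t))]]) /\
  (* (B) *)
  ((d < Phi R /\ gam < gamma_plus k d) ->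
     exists t1 t2, [/\ 0 < t1, t1 < t2 & t2 < 1] /\
       [/\ (forall t, (0 < t < t1) \/ (t2 < t <= 1) ->
          two_points (fiber (Zs d gam k) t)),
       (forall t, t = t1 \/ t = t2 ->
          fiber (Zs d gam k) t = [set (cos (pi / 2), sin (pi / 2))]) &
       (forall t, t1 < t < t2 -> fiber (Zs d gam k) t = set0)] /\
       subcritical_fold d gam k t1 (pi / 2) /\
       supercritical_fold d gam k t2 (pi / 2) /\
       exists A B, [/\ A <> B, components (Zs d gam k) = [set A; B],
         A `<=` [set q | q.1 <= t1] & B `<=` [set q | t2 <= q.1]]) /\
  (* (C) *)
  (Phi R < d ->
     exists t0, 0 < t0 < 1 /\
       [/\ (forall t, t < t0 -> fiber (Zs d gam k) t = set0),
       fiber (Zs d gam k) t0 = [set (cos (pi / 2), sin (pi / 2))],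
       (forall t, t0 < t <= 1 -> two_points (fiber (Zs d gam k) t)),
       supercritical_fold d gam k t0 (pi / 2) &
       connected (Zs d gam k)]).
Proof.
move=> hk hg hd; split; [|split].
- by case; exact: Zs_above_gamma_plus.
- by case; exact: Zs_below_gamma_plus.
- exact: Zs_beyond_golden_ratio.
Qed.
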